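(* The generating series $F(q;x)=\sum_\gamma q^{\omega_{HU}(\gamma)+\omega_{DH}(\gamma)+\omega_{DU}(\gamma)+\omega_{HH}(\gamma)}x^{|\gamma|}$, where $\gamma$ ranges over all Grand Motzkin paths and $|\gamma|$ is the length, is $$F(q;x)=\frac{1+(1-q)x}{\sqrt{(1+x)\big(1-(1+2q)x-(1-q^2)x^2+(1-q)^2x^3\big)}}.$$
   Context: Steps: $U=(1,1)$, $D=(1,-1)$, $H=(1,0)$. A Grand Motzkin path of length $n$ is any lattice path from $(0,0)$ to $(n,0)$ with steps $U,D,H$. Paths are identified with words of steps, and $\omega_\alpha(\gamma)$ is the number of occurrences of the word $\alpha$ as a factor (contiguous subword, overlapping occurrences counted separately) of $\gamma$. *)

From HB Require Import structures.
From mathcomp Require Import all_boot all_order all_algebra.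
Set Implicit Arguments. Unset Strict Implicit. Unset Printing Implicit Defensive.
Import Order.TTheory GRing.Theory Num.Theory.

(* Steps U=(1,1), D=(1,-1), H=(1,0). *)
Inductive step := U | D | H.

Definition step_eqb (a b : step) : bool :=
  match a, b with U, U | D, D | H, H => true | _, _ => false end.
Lemma step_eqP : Equality.axiom step_eqb.
Proof. by case; case; constructor. Qed.
HB.instance Definition _ := hasDecEq.Build step step_eqP.

Definition dy (s : step) : int := match s with U => 1 | D => -1 | H => 0 end%R.

Fixpoint words (n : nat) : seq (seq step) :=
  if n is n'.+1 then [seq s :: w | s <- [:: U; D; H], w <- words n'] else [:: [::]].

Definition grand_motzkin (n : nat) : seq (seq step) :=
  [seq w <- words n | (\sum_(s <- w) dy s == 0)%R].

(* omega_alpha(gamma): number of (possibly overlapping) occurrences of alpha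
   as a contiguous factor of gamma *)
Definition omega (alpha gamma : seq step) : nat :=
  \sum_(i < size gamma) (take (size alpha) (drop i gamma) == alpha).

Definition stat (g : seq step) : nat :=
  omega [:: H; U] g + omega [:: D; H] g + omega [:: D; U] g + omega [:: H; H] g.

(* coefficient of x^n in F(q;x), a polynomial in q with integer coefficients *)
Definition Fcoef (n : nat) : {poly int} :=
  (\sum_(g <- grand_motzkin n) 'X^(stat g))%R.

Definition Fsq_coef (n : nat) : {poly int} :=
  (\sum_(i < n.+1) Fcoef i * Fcoef (n - i))%R.

Local Open Scope ring_scope.
(* Polynomials in x whose coefficients are polynomials in q *)
Definition qq : {poly {poly int}} := ('X : {poly int})%:P.
Definition xx : {poly {poly int}} := 'X.

Definition Rad : {poly {poly int}} :=
  (1 + xx) * (1 - (1 + 2%:R * qq) * xx - (1 - qq ^+ 2) * xx ^+ 2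
              + (1 - qq) ^+ 2 * xx ^+ 3).

Definition Numer : {poly {poly int}} := 1 + (1 - qq) * xx.

From HB Require Import structures.
From mathcomp Require Import all_boot all_order all_algebra.
From mathcomp Require Import zify ring.
Set Implicit Arguments. Unset Strict Implicit. Unset Printing Implicit Defensive.
Import GRing.Theory.
Local Open Scope ring_scope.

(* The four counted factors HU, DH, DU, HH are exactly the pairs of consecutive
   steps (s, t) with s <> U and t <> D ("marked" pairs), so q^stat is a product
   of local contributions that factors across a concatenation up to the single
   pair at the junction.
   Every nonempty Grand Motzkin path splits at its first return to the axis as
   H v, U m D v or D m U v, with m a Motzkin (resp. negative Motzkin) path and v
   a Grand Motzkin path.  This yields convolution recurrences for the
   coefficients of six series: F (Grand Motzkin paths), G (the same, preceded
   by an H), M (Motzkin paths), MH (Motzkin paths preceded by an H), T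
   (negative Motzkin paths m weighted as D m U) and TU (weighted as m U).
   Read modulo x^(N+1) in Z[q][x], for an arbitrary N, the recurrences become
   algebraic equations; eliminating G, MH, T and TU (cancelling factors whose
   constant term is a unit) gives F (P - 2 q x^2 M) = 1 + (1-q) x together
   with q x^2 M^2 - P M + 1 + (1-q) x = 0, where P = 1 - q x - (1-q) x^2.
   Squaring, and using Rad = P^2 - 4 q x^2 (1 + (1-q) x), gives
   F^2 Rad = (1 + (1-q) x)^2, which is the theorem coefficientwise. *)

Definition marked (s t : step) : bool := (s != U) && (t != D).

Fixpoint marks (w : seq step) : nat :=
  if w is s :: w' then ((if w' is t :: _ then marked s t else false) + marks w')%N
  else 0.

Lemma omega_cons alpha s w :
  omega alpha (s :: w) = ((take (size alpha) (s :: w) == alpha) + omega alpha w)%N.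
Proof. by rewrite /omega /= big_ord_recl. Qed.

Lemma stat_marks w : stat w = marks w.
Proof.
elim: w => [|s w IHw]; first by rewrite /stat /omega !big_ord0.
rewrite /stat !omega_cons /= -IHw /stat; clear IHw.
by case: s; case: w => [|[] w] //=; rewrite ?take0 /=; lia.
Qed.

(* Marked pairs are local: splitting a word at a letter a only duplicates a. *)
Lemma marks_junction u a v : marks (u ++ a :: v) = (marks (rcons u a) + marks (a :: v))%N.
Proof. by elim: u => [|s u IHu] //=; rewrite IHu addnA; case: u {IHu}. Qed.

Definition weight (w : seq step) : {poly int} := 'X^(marks w).

Lemma weight_cons2 s t v : weight (s :: t :: v) = 'X^(marked s t) * weight (t :: v).
Proof. by rewrite /weight -exprD. Qed.

(* A leading D or H marks the same pairs. *)
Lemma weight_DH v : weight (D :: v) = weight (H :: v).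
Proof. by case: v. Qed.

(* Weight factorisation for a prime factor U m D followed by v; the step D
   behaves towards v like an H. *)
Lemma weight_UmD m v : weight (U :: m ++ D :: v) = weight m * weight (H :: v).
Proof.
have marks_rconsD w : marks (rcons w D) = marks w.
  elim: w => [|s w IHw] //=; rewrite IHw.
  by case: w {IHw} => [|t w] //=; rewrite /marked andbF.
rewrite -weight_DH /weight -cat_cons marks_junction /= marks_rconsD -exprD.
by case: m.
Qed.

Lemma weight_DmU m v : weight (D :: m ++ U :: v) = weight (D :: rcons m U) * weight v.
Proof. by rewrite /weight -cat_cons marks_junction -exprD; case: v. Qed.

Definition height (w : seq step) : int := \sum_(s <- w) dy s.

Lemma height_nil : height [::] = 0. Proof. exact: big_nil. Qed.
Lemma height_cons s w : height (s :: w) = dy s + height w. Proof. exact: big_cons. Qed.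
Lemma height_cat u v : height (u ++ v) = height u + height v. Proof. exact: big_cat. Qed.

Definition flip (s : step) : step := match s with U => D | D => U | H => H end.

Lemma flip_invol : involutive flip. Proof. by case. Qed.

Lemma height_flip w : height (map flip w) = - height w.
Proof.
rewrite /height big_map -sumrN; apply: eq_bigr => s _.
by case: s; rewrite /= ?opprK ?oppr0.
Qed.

Fixpoint nonneg (h : int) (w : seq step) : bool :=
  if w is s :: w' then (0 <= h + dy s) && nonneg (h + dy s) w' else true.

Definition motzkin (w : seq step) : bool := nonneg 0 w && (height w == 0).
Definition neg_motzkin (w : seq step) : bool := motzkin (map flip w).

Lemma nonneg_cat h u v : nonneg h (u ++ v) = nonneg h u && nonneg (h + height u) v.
Proof.
elim: u h => [|s u IHu] h /=; first by rewrite height_nil addr0.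
by rewrite IHu height_cons addrA andbA.
Qed.

Lemma nonneg_mono h h' w : h <= h' -> nonneg h w -> nonneg h' w.
Proof.
elim: w h h' => [|s w IHw] h h' //= hh' /andP [hs hw].
by rewrite (IHw (h + dy s)) ?andbT //; lia.
Qed.

Lemma nonneg_UmD m v : motzkin m -> nonneg 0 (U :: m ++ D :: v) = nonneg 0 v.
Proof.
case/andP => m_nonneg /eqP m_height /=; rewrite nonneg_cat /= m_height.
by rewrite (nonneg_mono _ m_nonneg) // add0r addr0 addrN.
Qed.

Fixpoint returns (h : int) (w : seq step) : bool :=
  if w is s :: w' then (if h + dy s == 0 then nilp w' else returns (h + dy s) w')
  else false.

Fixpoint first_return (h : int) (w : seq step) : nat :=
  if w is s :: w' then (if h + dy s == 0 then 1 else (first_return (h + dy s) w').+1)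
  else 0.

Lemma returns_flip h w : returns h (map flip w) = returns (- h) w.
Proof.
elim: w h => [|s w IHw] h //=.
have -> : - h + dy s = - (h + dy (flip s)) by case: s => /=; rewrite ?opprD ?opprK ?oppr0.
by rewrite oppr_eq0 -IHw /nilp size_map.
Qed.

Lemma returns_height h w : returns h w -> h + height w = 0.
Proof.
elim: w h => [|s w IHw] h //=; rewrite height_cons addrA.
by case: eqP => [hs /nilP -> | _ /IHw]; rewrite ?height_nil ?addr0.
Qed.

Lemma first_return_le h w : (first_return h w <= size w)%N.
Proof. by elim: w h => [|s w IHw] h //=; case: ifP => // _; apply: IHw. Qed.

Lemma first_return_cat h u v : u ++ v != [::] -> h + height (u ++ v) = 0 ->
  (first_return h (u ++ v) == size u) = returns h u.
Proof.
elim: u h => [|s u IHu] h /=; first by case: v => [|t v] //= _ _; case: ifP.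
move=> _; rewrite height_cons addrA => uv_height.
case: (h + dy s =P 0) => [_ | hs]; first by case: (u).
rewrite eqSS IHu //; apply/eqP => uv_nil; apply: hs.
by move: uv_height; rewrite uv_nil height_nil addr0.
Qed.

Lemma returns_up h m t : 0 <= h ->
  returns (h + 1) (rcons m t) = [&& t == D, nonneg h m & h + height m == 0].
Proof.
elim: m h => [|s m IHm] h h_ge0 /=.
  rewrite height_nil addr0; case: t => /=; repeat case: eqP => ?; try done; lia.
case: (h + 1 + dy s =P 0) => hs.
  by rewrite (_ : 0 <= h + dy s = false) ?andbF //; [case: (m) | lia].
have hs_ge0 : 0 <= h + dy s by case: s hs => /=; lia.
rewrite (_ : h + 1 + dy s = (h + dy s) + 1); last by ring.
by rewrite IHm // hs_ge0 height_cons addrA.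
Qed.

Lemma returns_prime a m b : returns 0 (a :: rcons m b) =
  [&& a == U, b == D & motzkin m] || [&& a == D, b == U & neg_motzkin m].
Proof.
case: a => /=.
- by rewrite -[1]add0r returns_up // !add0r orbF.
- rewrite -[rcons m b](mapK flip_invol) returns_flip map_rcons.
  rewrite (_ : - (0 + dy D) = 0 + 1) ?returns_up // add0r.
  by case: b.
- by case: (m).
Qed.

Lemma size_words n w : w \in words n -> size w = n.
Proof.
elim: n w => [|n IHn] w /=; first by rewrite inE => /eqP ->.
by rewrite !mem_cat in_nil orbF => /or3P [] /mapP [v /IHn v_size ->] /=; rewrite v_size.
Qed.

Lemma sum_words_cat (R : nmodType) a b (f : seq step -> R) :
  \sum_(w <- words (a + b)) f w = \sum_(u <- words a) \sum_(v <- words b) f (u ++ v).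
Proof.
elim: a f => [|a IHa] f; first by rewrite add0n big_seq1.
by rewrite addSn /= !big_cat !big_nil !big_map !IHa.
Qed.

Lemma sum_words1 (R : nmodType) (f : seq step -> R) :
  \sum_(u <- words 1) f u = f [:: U] + f [:: D] + f [:: H].
Proof. by rewrite /= !big_cons !big_nil !addr0 addrA. Qed.

Lemma sum_first_return (R : nmodType) n (f : seq step -> R) : (0 < n)%N ->
  \sum_(w <- words n | height w == 0) f w =
  \sum_(k < n.+1) \sum_(u <- words k | returns 0 u)
     \sum_(v <- words (n - k) | height v == 0) f (u ++ v).
Proof.
move=> n_gt0.
transitivity (\sum_(k < n.+1) \sum_(w <- words n | height w == 0)
                 (if first_return 0 w == k then f w else 0)).
  rewrite exchange_big /= big_seq_cond [RHS]big_seq_cond.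
  apply: eq_bigr => w /andP [/size_words w_size _].
  rewrite (bigD1 (inord (first_return 0 w))) //= inordK; last first.
    by rewrite ltnS -w_size first_return_le.
  rewrite eqxx big1 ?addr0 // => k /negbTE k_neq; case: eqP => // fr_k.
  by move: k_neq; rewrite fr_k inord_val eqxx.
apply: eq_bigr => k _.
have k_le_n : (k <= n)%N by rewrite -ltnS.
rewrite big_mkcond -[in words n](subnKC k_le_n) sum_words_cat [RHS]big_mkcond.
apply: eq_big_seq => u /size_words u_size.
rewrite (_ : (if returns 0 u then _ else 0) = \sum_(v <- words (n - k))
   (if returns 0 u && (height v == 0) then f (u ++ v) else 0)); last first.
  by case: (returns 0 u); [rewrite big_mkcond | rewrite big1].
apply: eq_big_seq => v /size_words v_size.
have uv_ne0 : u ++ v != [::].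
  by rewrite -size_eq0 size_cat u_size v_size subnKC -?lt0n // -ltnS.
case u_ret: (returns 0 u); last first.
  case: ifP => // /eqP uv_height.
  by rewrite -u_size first_return_cat ?u_ret // add0r.
have u_height : height u = 0 by rewrite -(returns_height u_ret) add0r.
rewrite /= height_cat u_height add0r; case: ifP => // /eqP v_height.
by rewrite -u_size first_return_cat ?u_ret // add0r height_cat u_height v_height addr0.
Qed.

Lemma sum_prime_words (R : nmodType) j (g : seq step -> R) :
  \sum_(u <- words j.+2 | returns 0 u) g u =
  \sum_(m <- words j | motzkin m) g (U :: rcons m D) +
  \sum_(m <- words j | neg_motzkin m) g (D :: rcons m U).
Proof.
rewrite big_mkcond (_ : j.+2 = 1 + (j + 1))%N; last by rewrite addn1.
rewrite sum_words_cat sum_words1; do 3 rewrite sum_words_cat.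
rewrite -!big_split [in RHS]big_mkcond [X in _ + X]big_mkcond -big_split.
apply: eq_bigr => m _; rewrite !sum_words1 !cats1 !cat1s !returns_prime /=.
by case: (motzkin m); case: (neg_motzkin m); rewrite /= ?add0r ?addr0.
Qed.

Lemma sum_grand_motzkin_decomp (R : nmodType) n (f : seq step -> R) :
  \sum_(w <- words n.+1 | height w == 0) f w =
  \sum_(v <- words n | height v == 0) f (H :: v) +
  \sum_(j < n)
    (\sum_(m <- words j | motzkin m)
        \sum_(v <- words (n - j.+1) | height v == 0) f (U :: m ++ D :: v) +
     \sum_(m <- words j | neg_motzkin m)
        \sum_(v <- words (n - j.+1) | height v == 0) f (D :: m ++ U :: v)).
Proof.
rewrite sum_first_return // !big_ord_recl big_mkcond big_seq1 /= add0r.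
rewrite big_mkcond sum_words1 /= !add0r subn1 /=; congr (_ + _).
apply: eq_bigr => j _; rewrite sum_prime_words subSS.
by congr (_ + _); apply: eq_bigr => m _; apply: eq_bigr => v _; rewrite /= cat_rcons.
Qed.

Definition cF n : {poly int} := \sum_(w <- words n | height w == 0) weight w.
Definition cG n : {poly int} := \sum_(w <- words n | height w == 0) weight (H :: w).
Definition cM n : {poly int} := \sum_(w <- words n | motzkin w) weight w.
Definition cMH n : {poly int} := \sum_(w <- words n | motzkin w) weight (H :: w).
Definition cT n : {poly int} :=
  \sum_(w <- words n | neg_motzkin w) weight (D :: rcons w U).
Definition cTU n : {poly int} := \sum_(w <- words n | neg_motzkin w) weight (rcons w U).

Lemma cF0 : cF 0 = 1. Proof. by rewrite /cF big_mkcond big_seq1 height_nil. Qed.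
Lemma cG0 : cG 0 = 1. Proof. by rewrite /cG big_mkcond big_seq1 height_nil. Qed.
Lemma cM0 : cM 0 = 1. Proof. by rewrite /cM big_mkcond big_seq1 /motzkin height_nil. Qed.
Lemma cMH0 : cMH 0 = 1.
Proof. by rewrite /cMH big_mkcond big_seq1 /motzkin height_nil. Qed.
Lemma cT0 : cT 0 = 'X.
Proof. by rewrite /cT big_mkcond big_seq1 /neg_motzkin /motzkin height_nil. Qed.
Lemma cTU0 : cTU 0 = 1.
Proof. by rewrite /cTU big_mkcond big_seq1 /neg_motzkin /motzkin height_nil. Qed.

Lemma sum_motzkin (R : nmodType) s (g : seq step -> R) :
  \sum_(w <- s | motzkin w) g w =
  \sum_(w <- s | height w == 0) (if nonneg 0 w then g w else 0).
Proof.
rewrite big_mkcond [RHS]big_mkcond; apply: eq_bigr => w _.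
by rewrite /motzkin andbC; case: (height w == 0).
Qed.

Lemma sum_neg_motzkin (R : nmodType) s (g : seq step -> R) :
  \sum_(w <- s | neg_motzkin w) g w =
  \sum_(w <- s | height w == 0) (if nonneg 0 (map flip w) then g w else 0).
Proof.
rewrite big_mkcond [RHS]big_mkcond; apply: eq_bigr => w _.
by rewrite /neg_motzkin /motzkin height_flip oppr_eq0 andbC; case: (height w == 0).
Qed.

Lemma map_flip_DmU m v :
  map flip (D :: m ++ U :: v) = U :: map flip m ++ D :: map flip v.
Proof. by rewrite /= map_cat. Qed.

Lemma cF_rec n : cF n.+1 =
  cG n + \sum_(j < n) (cM j * cG (n - j.+1) + cT j * cF (n - j.+1)).
Proof.
rewrite /cF sum_grand_motzkin_decomp; congr (_ + _); apply: eq_bigr => j _.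
congr (_ + _); rewrite big_distrlr; apply: eq_bigr => m _; apply: eq_bigr => v _.
  exact: weight_UmD.
exact: weight_DmU.
Qed.

Lemma cG_rec n : cG n.+1 =
  'X * cG n + \sum_(j < n) ('X * cM j * cG (n - j.+1) + cT j * cF (n - j.+1)).
Proof.
rewrite /cG sum_grand_motzkin_decomp mulr_sumr; congr (_ + _).
  by apply: eq_bigr => v _; rewrite weight_cons2.
apply: eq_bigr => j _; congr (_ + _).
  rewrite -mulrA big_distrlr mulr_sumr; apply: eq_bigr => m _.
  rewrite mulr_sumr; apply: eq_bigr => v _.
  by rewrite weight_cons2 weight_UmD mulrA.
rewrite big_distrlr; apply: eq_bigr => m _; apply: eq_bigr => v _.
by rewrite weight_cons2 mul1r weight_DmU.
Qed.

Lemma cM_rec n : cM n.+1 = cMH n + \sum_(j < n) cM j * cMH (n - j.+1).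
Proof.
rewrite /cM sum_motzkin sum_grand_motzkin_decomp -sum_motzkin; congr (_ + _).
apply: eq_bigr => j _; rewrite [X in _ + X]big1 ?addr0; last first.
  by move=> m _; apply: big1 => v _.
rewrite big_distrlr; apply: eq_big => // m m_motzkin.
rewrite sum_motzkin; apply: eq_bigr => v _.
by rewrite nonneg_UmD // weight_UmD; case: ifP; rewrite ?mulr0.
Qed.

Lemma cMH_pos n : cMH n.+1 = 'X * cM n.+1.
Proof.
rewrite /cMH /cM mulr_sumr big_seq_cond [RHS]big_seq_cond.
apply: eq_bigr => -[|s w] /andP [/size_words //= _ /andP [/andP [s_nonneg _] _]].
by rewrite weight_cons2; case: s s_nonneg.
Qed.

Lemma cT_rec n : cT n.+1 = 'X * cT n + \sum_(j < n) cT j * cTU (n - j.+1).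
Proof.
rewrite /cT sum_neg_motzkin sum_grand_motzkin_decomp -sum_neg_motzkin mulr_sumr.
congr (_ + _); first by apply: eq_bigr => v _; rewrite weight_cons2.
apply: eq_bigr => j _; rewrite big1 ?add0r; last first.
  by move=> m _; apply: big1 => v _.
rewrite big_distrlr; apply: eq_big => // m m_neg.
rewrite sum_neg_motzkin; apply: eq_bigr => v _.
rewrite map_flip_DmU nonneg_UmD //= rcons_cat /= weight_cons2 mul1r weight_DmU.
by case: ifP; rewrite ?mulr0.
Qed.

Lemma cTU_rec n : cTU n.+1 = cT n + \sum_(j < n) cT j * cTU (n - j.+1).
Proof.
rewrite /cTU sum_neg_motzkin sum_grand_motzkin_decomp -sum_neg_motzkin.
(* The H v terms are cT n: weight (H :: rcons v U) computes as weight (D :: rcons v U). *)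
congr (_ + _).
apply: eq_bigr => j _; rewrite big1 ?add0r; last first.
  by move=> m _; apply: big1 => v _.
rewrite big_distrlr; apply: eq_big => // m m_neg.
rewrite sum_neg_motzkin; apply: eq_bigr => v _.
rewrite map_flip_DmU nonneg_UmD //= rcons_cat /= weight_DmU.
by case: ifP; rewrite ?mulr0.
Qed.

(* Polynomials over R modulo x^(N+1): [negligible N p] says p = O(x^(N+1)). *)
Section Truncation.
Variables (R : nzRingType) (N : nat).

Definition negligible (p : {poly R}) : Prop := forall i, (i <= N)%N -> p`_i = 0.

Lemma negligibleD p r : negligible p -> negligible r -> negligible (p + r).
Proof. by move=> p0 r0 i le_iN; rewrite coefD p0 // r0 // addr0. Qed.

Lemma negligibleN p : negligible p -> negligible (- p).
Proof. by move=> p0 i le_iN; rewrite coefN p0 // oppr0. Qed.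

Lemma negligibleB p r : negligible p -> negligible r -> negligible (p - r).
Proof. by move=> p0 r0; apply/negligibleD/negligibleN. Qed.

Lemma negligibleMl c p : negligible p -> negligible (c * p).
Proof.
move=> p0 i le_iN; rewrite coefM big1 // => j _.
by rewrite p0 ?mulr0 // (leq_trans (leq_subr _ _)).
Qed.

Definition ser (a : nat -> R) : {poly R} := \poly_(i < N.+1) a i.

Lemma coef_ser a i : (i <= N)%N -> (ser a)`_i = a i.
Proof. by move=> le_iN; rewrite coef_poly ltnS le_iN. Qed.

Lemma coef_ser_mul a b i : (i <= N)%N ->
  (ser a * ser b)`_i = \sum_(j < i.+1) a j * b (i - j)%N.
Proof.
move=> le_iN; rewrite coefM; apply: eq_bigr => j _.
by rewrite !coef_ser // (leq_trans _ le_iN) // ?leq_subr // -ltnS.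
Qed.

Lemma coef_X_ser_mul a b i : (i <= N)%N ->
  ('X * (ser a * ser b))`_i = \sum_(j < i) a j * b (i - j.+1)%N.
Proof.
move=> le_iN; rewrite coefXM; case: i le_iN => [|i] le_iN; first by rewrite big_ord0.
by rewrite coef_ser_mul ?(ltnW le_iN) //; apply: eq_bigr => j _; rewrite subSS.
Qed.

Lemma negligible_shift a (S : {poly R}) : (forall i, (i < N)%N -> a i.+1 = S`_i) ->
  negligible (ser a - (a 0%N)%:P - 'X * S).
Proof.
move=> a_rec [|i] le_iN; rewrite !coefB coefXM coefC coef_ser //=.
  by rewrite !subrr.
by rewrite a_rec // subr0 subrr.
Qed.

End Truncation.

Lemma negligible_cancel (R : unitRingType) N (p u : {poly R}) :
  negligible N (p * u) -> u`_0 \is a GRing.unit -> negligible N p.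
Proof.
move=> pu0 u0_unit; have u0_reg : GRing.rreg u`_0 by move=> x y; apply: mulIr.
move=> i; elim: i {-2}i (leqnn i) => [|i IHi] j le_ji le_jN.
  move: le_ji (pu0 j le_jN); rewrite leqn0 => /eqP ->; rewrite coefM big_ord1 subnn.
  by move/eqP; rewrite mulIr_eq0 // => /eqP.
have pk0 k : (k < j)%N -> p`_k = 0 by move=> lt_kj; apply: IHi; lia.
move: (pu0 j le_jN); rewrite coefM big_ord_recr /= big1 ?add0r; last first.
  by move=> k _; rewrite pk0 ?mul0r.
by rewrite subnn => /eqP; rewrite mulIr_eq0 // => /eqP.
Qed.

Section Elimination.
Variable N : nat.

Local Notation Fs := (ser N cF).
Local Notation Gs := (ser N cG).
Local Notation Ms := (ser N cM).
Local Notation MHs := (ser N cMH).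
Local Notation Ts := (ser N cT).
Local Notation TUs := (ser N cTU).
Local Notation P := (1 - qq * xx - (1 - qq) * xx ^+ 2).

Lemma coef_qq p i : (qq * p)`_i = 'X * p`_i.
Proof. exact: coefCM. Qed.

Lemma eqF : negligible N (Fs - 1 - xx * (Gs + xx * (Ms * Gs) + xx * (Ts * Fs))).
Proof.
rewrite -polyC1 -cF0; apply: negligible_shift => i /ltnW le_iN.
by rewrite !coefD !coef_X_ser_mul ?coef_ser // cF_rec big_split addrA.
Qed.

Lemma eqG : negligible N
  (Gs - 1 - xx * (qq * (Gs + xx * (Ms * Gs)) + xx * (Ts * Fs))).
Proof.
rewrite -polyC1 -cG0; apply: negligible_shift => i /ltnW le_iN.
rewrite !coefD coef_qq coefD !coef_X_ser_mul ?coef_ser // cG_rec big_split.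
rewrite mulrDr addrA; congr (_ + _ + _).
by rewrite mulr_sumr; apply: eq_bigr => j _; rewrite mulrA.
Qed.

Lemma eqM : negligible N (Ms - 1 - xx * (MHs + xx * (Ms * MHs))).
Proof.
rewrite -polyC1 -cM0; apply: negligible_shift => i /ltnW le_iN.
by rewrite coefD coef_X_ser_mul ?coef_ser // cM_rec.
Qed.

Lemma eqMH : negligible N (MHs - 1 - qq * (Ms - 1)).
Proof.
move=> [|i] le_iN; rewrite !coefB coef_qq coefB coef1 !coef_ser //=.
  by rewrite cMH0 cM0 !subrr mulr0 subr0.
by rewrite cMH_pos !subr0 subrr.
Qed.

Lemma eqT : negligible N (Ts - qq - xx * (qq * Ts + xx * (Ts * TUs))).
Proof.
rewrite {1}/qq -cT0; apply: negligible_shift => i /ltnW le_iN.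
by rewrite coefD coef_qq coef_X_ser_mul ?coef_ser // cT_rec.
Qed.

Lemma eqTU : negligible N (TUs - 1 - xx * (Ts + xx * (Ts * TUs))).
Proof.
rewrite -polyC1 -cTU0; apply: negligible_shift => i /ltnW le_iN.
by rewrite coefD coef_X_ser_mul ?coef_ser // cTU_rec.
Qed.

Lemma quadM : negligible N (qq * xx ^+ 2 * Ms ^+ 2 - P * Ms + Numer).
Proof.
have -> : qq * xx ^+ 2 * Ms ^+ 2 - P * Ms + Numer =
  - ((Ms - 1 - xx * (MHs + xx * (Ms * MHs))) +
     (xx + xx ^+ 2 * Ms) * (MHs - 1 - qq * (Ms - 1))) by rewrite /Numer; ring.
by apply/negligibleN/negligibleD; [exact: eqM | apply/negligibleMl/eqMH].
Qed.

Lemma quadT : negligible N (Numer * xx ^+ 2 * Ts ^+ 2 - P * Ts + qq).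
Proof.
pose eT := Ts - qq - xx * (qq * Ts + xx * (Ts * TUs)).
pose eTU := TUs - 1 - xx * (Ts + xx * (Ts * TUs)).
have -> : Numer * xx ^+ 2 * Ts ^+ 2 - P * Ts + qq =
  - (eT + xx ^+ 2 * Ts * (eTU - eT)) by rewrite /eT /eTU /Numer; ring.
apply/negligibleN/negligibleD; first exact: eqT.
by apply/negligibleMl/negligibleB; [exact: eqTU | exact: eqT].
Qed.

(* The two quadratics have related roots: q M = (1 + (1-q) x) T.  The other
   root factor has constant term -1 and is cancelled. *)
Lemma M_T : negligible N (qq * Ms - Numer * Ts).
Proof.
apply: (@negligible_cancel _ _ _ (xx ^+ 2 * (qq * Ms + Numer * Ts) - P)).
  have -> : (qq * Ms - Numer * Ts) * (xx ^+ 2 * (qq * Ms + Numer * Ts) - P) =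
    qq * (qq * xx ^+ 2 * Ms ^+ 2 - P * Ms + Numer) -
    Numer * (Numer * xx ^+ 2 * Ts ^+ 2 - P * Ts + qq) by rewrite /Numer; ring.
  by apply/negligibleB; apply/negligibleMl; [exact: quadM | exact: quadT].
suff -> : (xx ^+ 2 * (qq * Ms + Numer * Ts) - P)`_0 = -1 by exact: unitrN1.
by rewrite -horner_coef0 /Numer /xx /qq !hornerE /=; ring.
Qed.

Lemma F_M : negligible N (Fs * (1 - xx ^+ 2 * Ts * Ms) - Ms).
Proof.
pose eF := Fs - 1 - xx * (Gs + xx * (Ms * Gs) + xx * (Ts * Fs)).
pose eG := Gs - 1 - xx * (qq * (Gs + xx * (Ms * Gs)) + xx * (Ts * Fs)).
pose eM := qq * xx ^+ 2 * Ms ^+ 2 - P * Ms + Numer.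
pose B := xx + xx ^+ 2 * Ms.
apply: (@negligible_cancel _ _ _ (1 - qq * B)).
  have -> : (Fs * (1 - xx ^+ 2 * Ts * Ms) - Ms) * (1 - qq * B) =
    (1 - qq * B) * eF + B * eG + (Fs * xx ^+ 2 * Ts + 1) * eM.
    by rewrite /eF /eG /eM /B /Numer; ring.
  apply/negligibleD; first apply/negligibleD.
  - exact/negligibleMl/eqF.
  - exact/negligibleMl/eqG.
  - exact/negligibleMl/quadM.
suff -> : (1 - qq * B)`_0 = 1 by exact: unitr1.
by rewrite -horner_coef0 /B /xx /qq !hornerE /=; ring.
Qed.

Lemma F_lin : negligible N (Fs * (P - 2%:R * qq * xx ^+ 2 * Ms) - Numer).
Proof.
apply: (@negligible_cancel _ _ _ Ms); last by rewrite coef_ser // cM0 unitr1.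
have -> : (Fs * (P - 2%:R * qq * xx ^+ 2 * Ms) - Numer) * Ms =
  Numer * (Fs * (1 - xx ^+ 2 * Ts * Ms) - Ms)
  - Fs * (qq * xx ^+ 2 * Ms ^+ 2 - P * Ms + Numer)
  - Fs * xx ^+ 2 * Ms * (qq * Ms - Numer * Ts) by rewrite /Numer; ring.
apply/negligibleB; first apply/negligibleB.
- exact/negligibleMl/F_M.
- exact/negligibleMl/quadM.
- exact/negligibleMl/M_T.
Qed.

Lemma F_squared : negligible N (Fs ^+ 2 * Rad - Numer ^+ 2).
Proof.
pose S := P - 2%:R * qq * xx ^+ 2 * Ms.
have -> : Fs ^+ 2 * Rad - Numer ^+ 2 =
  (Fs * S + Numer) * (Fs * S - Numer)
  - 4%:R * Fs ^+ 2 * qq * xx ^+ 2 * (qq * xx ^+ 2 * Ms ^+ 2 - P * Ms + Numer).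
  by rewrite /S /Rad /Numer; ring.
by apply/negligibleB; apply/negligibleMl; [exact: F_lin | exact: quadM].
Qed.
End Elimination.

Lemma Fcoef_cF n : Fcoef n = cF n.
Proof.
rewrite /Fcoef /grand_motzkin big_filter.
by apply: eq_bigr => w _; rewrite stat_marks.
Qed.

Theorem mainTheorem9 :
  Fcoef 0 = 1 /\
  forall n : nat,
    \sum_(k < n.+1) Fsq_coef (n - k) * Rad`_k = (Numer ^+ 2)`_n.
Proof.
split=> [|n]; first by rewrite Fcoef_cF cF0.
move/eqP: (F_squared (leqnn n)); rewrite coefB subr_eq0 => /eqP <-.
rewrite mulrC coefM; apply: eq_bigr => k _; rewrite mulrC /Fsq_coef.
rewrite expr2 coef_ser_mul ?leq_subr //.
by congr (_ * _); apply: eq_bigr => j _; rewrite !Fcoef_cF.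
Qed.
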